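(* Let $\rho$ be a representation of a unital operator algebra $\mathcal A$. If $\sigma$ is a coextension of $\rho$ which is an extremal coextension, and $\tau$ is a fully extremal extension of $\sigma$, then $\tau$ is a maximal representation (and hence a maximal dilation of $\rho$).
   Context: A representation of $\mathcal A$ on $H$ is a unital completely contractive homomorphism $\rho:\mathcal A\to B(H)$. For a representation $\sigma$ on $K\supseteq H$: $\sigma$ is a dilation of $\rho$ if $P_H\sigma(a)|_H=\rho(a)$ for all $a$; an extension if in addition $H$ is invariant for $\sigma(\mathcal A)$; a coextension if in addition $K\ominus H$ is invariant for $\sigma(\mathcal A)$. A representation $\rho$ on $H$ is an extremal coextension (resp. extremal extension, maximal) if every coextension (resp. extension, dilation) $\sigma$ of $\rho$ has $H$ as a reducing subspace, i.e. $\sigma=\rho\oplus\sigma'$. An extension $\tau$ of $\sigma$ acting on $L\supseteq K$ is fully extremal (with respect to $\sigma$) if whenever $\mu$ is a representation on a space containing $L$ which is a dilation of $\tau$ and an extension of $\sigma$, then $L$ reduces $\mu$, i.e. $\mu=\tau\oplus\mu'$. A maximal dilation of $\rho$ is a dilation of $\rho$ which is a maximal representation. *)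

From Stdlib Require Import Reals.
Open Scope R_scope.

Record C : Type := mkC { re : R ; im : R }.
Definition C0 : C := mkC 0 0.
Definition C1 : C := mkC 1 0.
Definition RtoC (r : R) : C := mkC r 0.
Definition Cadd (z w : C) : C := mkC (re z + re w) (im z + im w).
Definition Cmul (z w : C) : C :=
  mkC (re z * re w - im z * im w) (re z * im w + im z * re w).
Definition Cconj (z : C) : C := mkC (re z) (- im z).

(** * Complex Hilbert spaces
    Inner product: linear in the first variable, conjugate-linear in the second. *)
Record Hilbert : Type := {
  hcar :> Type;
  hzero : hcar;
  hadd : hcar -> hcar -> hcar;
  hopp : hcar -> hcar;
  hscal : C -> hcar -> hcar;
  hinner : hcar -> hcar -> C;
  hadd_assoc : forall x y z, hadd x (hadd y z) = hadd (hadd x y) z;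
  hadd_comm : forall x y, hadd x y = hadd y x;
  hadd_0 : forall x, hadd x hzero = x;
  hadd_opp : forall x, hadd x (hopp x) = hzero;
  hscal_1 : forall x, hscal C1 x = x;
  hscal_mul : forall a b x, hscal a (hscal b x) = hscal (Cmul a b) x;
  hscal_addr : forall a x y, hscal a (hadd x y) = hadd (hscal a x) (hscal a y);
  hscal_addl : forall a b x, hscal (Cadd a b) x = hadd (hscal a x) (hscal b x);
  hinner_addl : forall x y z, hinner (hadd x y) z = Cadd (hinner x z) (hinner y z);
  hinner_scall : forall a x y, hinner (hscal a x) y = Cmul a (hinner x y);
  hinner_conj : forall x y, hinner y x = Cconj (hinner x y);
  hinner_pos : forall x, im (hinner x x) = 0 /\ 0 <= re (hinner x x);
  hinner_def : forall x, hinner x x = C0 -> x = hzero;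
  hcomplete : forall u : nat -> hcar,
    (forall eps, 0 < eps -> exists N, forall m n, (N <= m)%nat -> (N <= n)%nat ->
        sqrt (re (hinner (hadd (u m) (hopp (u n))) (hadd (u m) (hopp (u n))))) < eps) ->
    exists l, forall eps, 0 < eps -> exists N, forall n, (N <= n)%nat ->
        sqrt (re (hinner (hadd (u n) (hopp l)) (hadd (u n) (hopp l)))) < eps
}.

Arguments hzero {h}.
Arguments hadd {h}.
Arguments hopp {h}.
Arguments hscal {h}.
Arguments hinner {h}.

Definition hsub {H : Hilbert} (x y : H) : H := hadd x (hopp y).
Definition hnorm {H : Hilbert} (x : H) : R := sqrt (re (hinner x x)).

Fixpoint sumR (n : nat) (f : nat -> R) : R :=
  match n with O => 0 | S k => sumR k f + f k end.
Fixpoint hsum {H : Hilbert} (n : nat) (f : nat -> H) : H :=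
  match n with O => hzero | S k => hadd (hsum k f) (f k) end.

Definition linear_map {H K : Hilbert} (T : H -> K) : Prop :=
  (forall x y, T (hadd x y) = hadd (T x) (T y)) /\
  (forall a x, T (hscal a x) = hscal a (T x)).

Definition op_norm_le {H K : Hilbert} (T : H -> K) (c : R) : Prop :=
  forall x, hnorm (T x) <= c * hnorm x.

Definition bounded_op {H : Hilbert} (T : H -> H) : Prop :=
  linear_map T /\ exists c, op_norm_le T c.

Definition unital_operator_algebra {H0 : Hilbert} (A : (H0 -> H0) -> Prop) : Prop :=
  (forall a, A a -> bounded_op a) /\
  A (fun x => x) /\
  (forall a b, A a -> A b -> A (fun x => hadd (a x) (b x))) /\
  (forall (c : C) a, A a -> A (fun x => hscal c (a x))) /\
  (forall a b, A a -> A b -> A (fun x => a (b x))) /\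
  (forall (u : nat -> H0 -> H0) (T : H0 -> H0),
      (forall n, A (u n)) -> bounded_op T ->
      (forall eps, 0 < eps -> exists N, forall n, (N <= n)%nat ->
          op_norm_le (fun x => hsub (u n x) (T x)) eps) ->
      A T).

(** norm bound for an n x n operator matrix [T i j] acting on H^n:
    ||[T_ij]|| <= c *)
Definition mat_norm_le {H : Hilbert} (n : nat) (T : nat -> nat -> H -> H) (c : R) : Prop :=
  forall x : nat -> H,
    sumR n (fun i => (hnorm (hsum n (fun j => T i j (x j)))) ^ 2)
      <= c ^ 2 * sumR n (fun j => (hnorm (x j)) ^ 2).

Definition representation {H0 : Hilbert} (A : (H0 -> H0) -> Prop)
    (H : Hilbert) (rho : (H0 -> H0) -> H -> H) : Prop :=
  (forall a, A a -> bounded_op (rho a)) /\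
  (forall x, rho (fun y => y) x = x) /\
  (forall a b, A a -> A b -> forall x,
      rho (fun y => hadd (a y) (b y)) x = hadd (rho a x) (rho b x)) /\
  (forall (c : C) a, A a -> forall x,
      rho (fun y => hscal c (a y)) x = hscal c (rho a x)) /\
  (forall a b, A a -> A b -> forall x,
      rho (fun y => a (b y)) x = rho a (rho b x)) /\
  (* completely contractive *)
  (forall (n : nat) (a : nat -> nat -> H0 -> H0) (c : R),
      0 <= c ->
      (forall i j, (i < n)%nat -> (j < n)%nat -> A (a i j)) ->
      mat_norm_le n a c ->
      mat_norm_le n (fun i j => rho (a i j)) c).

(** * Containment K ⊇ H : H is identified with the range of an isometry V : H -> K *)
Definition isometry {H K : Hilbert} (V : H -> K) : Prop :=
  linear_map V /\ forall x y, hinner (V x) (V y) = hinner x y.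

(** sigma (on K) is a dilation of rho (on H): P_H sigma(a)|_H = rho(a) *)
Definition dilation {H0 : Hilbert} (A : (H0 -> H0) -> Prop)
    {H K : Hilbert} (sigma : (H0 -> H0) -> K -> K) (rho : (H0 -> H0) -> H -> H)
    (V : H -> K) : Prop :=
  isometry V /\
  forall a, A a -> forall h h', hinner (sigma a (V h)) (V h') = hinner (rho a h) h'.

Definition invariant_range {H0 : Hilbert} (A : (H0 -> H0) -> Prop)
    {H K : Hilbert} (sigma : (H0 -> H0) -> K -> K) (V : H -> K) : Prop :=
  forall a, A a -> forall h, exists h', sigma a (V h) = V h'.

Definition invariant_perp {H0 : Hilbert} (A : (H0 -> H0) -> Prop)
    {H K : Hilbert} (sigma : (H0 -> H0) -> K -> K) (V : H -> K) : Prop :=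
  forall a, A a -> forall k : K, (forall h, hinner k (V h) = C0) ->
    forall h, hinner (sigma a k) (V h) = C0.

(** H reduces sigma, i.e. sigma = rho ⊕ sigma' *)
Definition reduces {H0 : Hilbert} (A : (H0 -> H0) -> Prop)
    {H K : Hilbert} (sigma : (H0 -> H0) -> K -> K) (V : H -> K) : Prop :=
  invariant_range A sigma V /\ invariant_perp A sigma V.

Definition extension {H0 : Hilbert} (A : (H0 -> H0) -> Prop)
    {H K : Hilbert} (sigma : (H0 -> H0) -> K -> K) (rho : (H0 -> H0) -> H -> H)
    (V : H -> K) : Prop :=
  dilation A sigma rho V /\ invariant_range A sigma V.

Definition coextension {H0 : Hilbert} (A : (H0 -> H0) -> Prop)
    {H K : Hilbert} (sigma : (H0 -> H0) -> K -> K) (rho : (H0 -> H0) -> H -> H)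
    (V : H -> K) : Prop :=
  dilation A sigma rho V /\ invariant_perp A sigma V.

Definition extremal_coextension {H0 : Hilbert} (A : (H0 -> H0) -> Prop)
    {H : Hilbert} (rho : (H0 -> H0) -> H -> H) : Prop :=
  forall (K : Hilbert) (sigma : (H0 -> H0) -> K -> K) (V : H -> K),
    representation A K sigma -> coextension A sigma rho V -> reduces A sigma V.

Definition extremal_extension {H0 : Hilbert} (A : (H0 -> H0) -> Prop)
    {H : Hilbert} (rho : (H0 -> H0) -> H -> H) : Prop :=
  forall (K : Hilbert) (sigma : (H0 -> H0) -> K -> K) (V : H -> K),
    representation A K sigma -> extension A sigma rho V -> reduces A sigma V.

Definition maximal {H0 : Hilbert} (A : (H0 -> H0) -> Prop)
    {H : Hilbert} (rho : (H0 -> H0) -> H -> H) : Prop :=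
  forall (K : Hilbert) (sigma : (H0 -> H0) -> K -> K) (V : H -> K),
    representation A K sigma -> dilation A sigma rho V -> reduces A sigma V.

Definition fully_extremal {H0 : Hilbert} (A : (H0 -> H0) -> Prop)
    {K L : Hilbert} (tau : (H0 -> H0) -> L -> L) (sigma : (H0 -> H0) -> K -> K)
    (W : K -> L) : Prop :=
  forall (M : Hilbert) (mu : (H0 -> H0) -> M -> M) (U : L -> M),
    representation A M mu -> dilation A mu tau U ->
    extension A mu sigma (fun k => U (W k)) -> reduces A mu U.

(** To see that [tau] is maximal, take any
    dilation [mu] of [tau] on [M ⊇ L]; it is then also a dilation of [sigma]
    (via the composite embedding [K -> L -> M]).  The heart of the proof is the
    fact that every dilation of an extremal coextension is an extension:
    inside [M] consider the set [N] of vectors [n] whose compression to [K]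
    intertwines, i.e. [P_K mu(a) n = sigma(a) P_K n] for all [a].  It is a
    closed [mu]-invariant subspace containing [K], and [mu] restricted to [N]
    is a coextension of [sigma].  Extremality makes [K] reducing for it, so
    [K] is [mu]-invariant and [mu] is an extension of [sigma].  Full
    extremality of [tau] then forces [L] to reduce [mu].  That [tau] dilates
    [rho] is just transitivity of dilations. *)

From Stdlib Require Import Reals Lra ClassicalEpsilon ProofIrrelevance.
Open Scope R_scope.

Lemma Ceq (z w : C) : re z = re w -> im z = im w -> z = w.
Proof. destruct z, w; simpl; intros; subst; reflexivity. Qed.

Lemma hscal0 {H : Hilbert} (x : H) : hscal C0 x = hzero.
Proof.
  assert (E : hscal C0 x = hadd (hscal C0 x) (hscal C0 x)).
  { rewrite <- hscal_addl. f_equal. apply Ceq; simpl; ring. }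
  set (v := hscal C0 x) in *.
  assert (E2 : hadd (hadd v v) (hopp v) = hadd v (hopp v)) by (rewrite <- E; reflexivity).
  rewrite <- hadd_assoc, !hadd_opp, hadd_0 in E2. exact E2.
Qed.

Lemma hopp_scal {H : Hilbert} (x : H) : hopp x = hscal (RtoC (-1)) x.
Proof.
  set (s := hscal (RtoC (-1)) x).
  assert (E : hadd x s = hzero).
  { unfold s. rewrite <- (hscal_1 _ x) at 1. rewrite <- hscal_addl.
    replace (Cadd C1 (RtoC (-1))) with C0 by (apply Ceq; simpl; ring). apply hscal0. }
  rewrite <- (hadd_0 _ (hopp x)), <- E, hadd_assoc, (hadd_comm _ (hopp x) x), hadd_opp.
  rewrite hadd_comm, hadd_0. reflexivity.
Qed.

Lemma inner_addr {H : Hilbert} (x y z : H) :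
  hinner x (hadd y z) = Cadd (hinner x y) (hinner x z).
Proof.
  rewrite hinner_conj, hinner_addl, (hinner_conj _ y x), (hinner_conj _ z x).
  destruct (hinner y x), (hinner z x). apply Ceq; simpl; ring.
Qed.

Lemma inner_scalr {H : Hilbert} (x : H) c y :
  hinner x (hscal c y) = Cmul (Cconj c) (hinner x y).
Proof.
  rewrite hinner_conj, hinner_scall, (hinner_conj _ y x).
  destruct c, (hinner y x). apply Ceq; simpl; ring.
Qed.

Lemma inner0l {H : Hilbert} (y : H) : hinner hzero y = C0.
Proof. rewrite <- (hscal0 (@hzero H)), hinner_scall. apply Ceq; simpl; ring. Qed.

Lemma re_inner_sym {H : Hilbert} (x y : H) : re (hinner y x) = re (hinner x y).
Proof. rewrite hinner_conj. reflexivity. Qed.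

Lemma inner_sub_l {H : Hilbert} (x y z : H) :
  hinner (hsub x y) z =
  mkC (re (hinner x z) - re (hinner y z)) (im (hinner x z) - im (hinner y z)).
Proof.
  unfold hsub. rewrite hinner_addl, hopp_scal, hinner_scall.
  destruct (hinner x z), (hinner y z). apply Ceq; simpl; ring.
Qed.

Lemma re_inner_comb {H : Hilbert} (x y z w : H) (s t : R) :
  re (hinner (hadd x (hscal (RtoC s) y)) (hadd z (hscal (RtoC t) w))) =
  re (hinner x z) + t * re (hinner x w) + s * re (hinner y z) + s * t * re (hinner y w).
Proof.
  rewrite !hinner_addl, !inner_addr, !hinner_scall, !inner_scalr.
  destruct (hinner x z), (hinner x w), (hinner y z), (hinner y w). simpl. ring.
Qed.

Lemma hnorm_pos {H : Hilbert} (x : H) : 0 <= hnorm x.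
Proof. apply sqrt_pos. Qed.

Lemma hnorm_sq {H : Hilbert} (x : H) : hnorm x * hnorm x = re (hinner x x).
Proof. apply sqrt_sqrt, hinner_pos. Qed.

Lemma linear_zero {H K : Hilbert} (T : H -> K) : linear_map T -> T hzero = hzero.
Proof. intros [_ Hs]. rewrite <- (hscal0 (@hzero H)), Hs. apply hscal0. Qed.

Lemma linear_sub {H K : Hilbert} (T : H -> K) x y :
  linear_map T -> T (hsub x y) = hsub (T x) (T y).
Proof. intros [Ha Hs]. unfold hsub. rewrite Ha, !hopp_scal, Hs. reflexivity. Qed.

(** Discriminant argument: the quadratic [t ↦ |x + t y|^2] is nonnegative. *)
Lemma cauchy_schwarz_re {H : Hilbert} (x y : H) :
  Rabs (re (hinner x y)) <= hnorm x * hnorm y.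
Proof.
  set (a := re (hinner x x)). set (b := re (hinner x y)). set (c := re (hinner y y)).
  assert (quad : forall t, 0 <= a + 2 * t * b + t * t * c).
  { intro t. pose proof (proj2 (hinner_pos _ (hadd x (hscal (RtoC t) y)))) as K.
    rewrite re_inner_comb, (re_inner_sym x y) in K. unfold a, b, c. lra. }
  assert (Ha : 0 <= a) by apply hinner_pos.
  assert (Hc : 0 <= c) by apply hinner_pos.
  assert (discr : b * b <= a * c).
  { destruct (Req_dec c 0) as [E|E].
    - destruct (Req_dec b 0) as [F|F]; [rewrite F, E; lra|].
      specialize (quad (- (a + 1) / (2 * b))).
      replace (a + 2 * (- (a + 1) / (2 * b)) * b
               + - (a + 1) / (2 * b) * (- (a + 1) / (2 * b)) * c)
        with (-1) in quad by (rewrite E; field; auto). lra.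
    - specialize (quad (- b / c)).
      replace (a + 2 * (- b / c) * b + - b / c * (- b / c) * c)
        with ((a * c - b * b) / c) in quad by (field; auto).
      assert (0 <= (a * c - b * b) / c * c) by (apply Rmult_le_pos; lra).
      replace ((a * c - b * b) / c * c) with (a * c - b * b) in H0 by (field; auto). lra. }
  pose proof (hnorm_sq x) as Nx. pose proof (hnorm_sq y) as Ny. fold a in Nx. fold c in Ny.
  pose proof (hnorm_pos x). pose proof (hnorm_pos y).
  assert (Hr : Rabs b * Rabs b = b * b) by (rewrite <- Rabs_mult, Rabs_right; nra).
  pose proof (Rabs_pos b).
  assert (0 <= hnorm x * hnorm y) by (apply Rmult_le_pos; auto).
  nra.
Qed.

(** The imaginary part is the real part of [<x, i y>]. *)
Lemma cauchy_schwarz_im {H : Hilbert} (x y : H) :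
  Rabs (im (hinner x y)) <= hnorm x * hnorm y.
Proof.
  set (iy := hscal (mkC 0 1) y).
  replace (im (hinner x y)) with (re (hinner x iy))
    by (unfold iy; rewrite inner_scalr; destruct (hinner x y); simpl; ring).
  replace (hnorm y) with (hnorm iy); [apply cauchy_schwarz_re|].
  unfold hnorm, iy. f_equal. rewrite hinner_scall, inner_scalr.
  destruct (hinner y y). simpl. ring.
Qed.

Lemma re_inner_sub {H : Hilbert} (x y l : H) :
  re (hinner (hsub x l) (hsub y l)) =
  re (hinner x y) - re (hinner x l) - re (hinner l y) + re (hinner l l).
Proof. unfold hsub. rewrite !hopp_scal, re_inner_comb. ring. Qed.

Lemma norm_triangle_sub {H : Hilbert} (x y l : H) :
  hnorm (hsub x y) <= hnorm (hsub x l) + hnorm (hsub y l).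
Proof.
  pose proof (cauchy_schwarz_re (hsub x l) (hsub y l)) as CS.
  pose proof (Rle_abs (- re (hinner (hsub x l) (hsub y l)))) as CS'.
  rewrite Rabs_Ropp in CS'.
  pose proof (hnorm_sq (hsub x y)) as N1. pose proof (hnorm_sq (hsub x l)) as N2.
  pose proof (hnorm_sq (hsub y l)) as N3.
  rewrite re_inner_sub in CS, CS', N1, N2, N3.
  rewrite (re_inner_sym x y), (re_inner_sym x l), (re_inner_sym y l) in *.
  pose proof (hnorm_pos (hsub x y)). pose proof (hnorm_pos (hsub x l)).
  pose proof (hnorm_pos (hsub y l)).
  set (n1 := hnorm (hsub x y)) in *. set (n2 := hnorm (hsub x l)) in *.
  set (n3 := hnorm (hsub y l)) in *.
  assert (n1 * n1 <= (n2 + n3) * (n2 + n3)) by nra.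
  nra.
Qed.

Definition converges {X : Hilbert} (u : nat -> X) (l : X) : Prop :=
  forall eps, 0 < eps -> exists N, forall n, (N <= n)%nat -> hnorm (hsub (u n) l) < eps.

Lemma dominated_increments_converge {X Y : Hilbert} (u : nat -> X) (l : X) (v : nat -> Y) :
  converges u l ->
  (forall m n, hnorm (hsub (v m) (v n)) <= hnorm (hsub (u m) (u n))) ->
  exists l', converges v l'.
Proof.
  intros Hu Hdom. apply (hcomplete Y v). intros eps He.
  destruct (Hu (eps / 2)) as [N HN]; [lra|]. exists N. intros m n Hm Hn.
  change (hnorm (hsub (v m) (v n)) < eps).
  eapply Rle_lt_trans; [apply Hdom|].
  eapply Rle_lt_trans; [apply (norm_triangle_sub _ _ l)|].
  pose proof (HN m Hm). pose proof (HN n Hn). lra.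
Qed.

Lemma bounded_inner_le {X Y : Hilbert} (T : X -> Y) c (x : X) (y : Y) :
  op_norm_le T c ->
  Rabs (re (hinner (T x) y)) <= Rabs c * hnorm x * hnorm y /\
  Rabs (im (hinner (T x) y)) <= Rabs c * hnorm x * hnorm y.
Proof.
  intros HT.
  assert (HTx : hnorm (T x) * hnorm y <= Rabs c * hnorm x * hnorm y).
  { apply Rmult_le_compat_r; [apply hnorm_pos|].
    eapply Rle_trans; [apply HT|].
    apply Rmult_le_compat_r; [apply hnorm_pos | apply Rle_abs]. }
  split; eapply Rle_trans;
    [apply cauchy_schwarz_re | exact HTx | apply cauchy_schwarz_im | exact HTx].
Qed.

Lemma inner_cv {X Y : Hilbert} (T : X -> Y) c (u : nat -> X) (l : X) (y : Y) :
  linear_map T -> op_norm_le T c -> converges u l ->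
  Un_cv (fun n => re (hinner (T (u n)) y)) (re (hinner (T l) y)) /\
  Un_cv (fun n => im (hinner (T (u n)) y)) (im (hinner (T l) y)).
Proof.
  intros HTl HT Hu.
  set (B := Rabs c * hnorm y + 1).
  assert (HB : 0 < B) by (pose proof (Rabs_pos c); pose proof (hnorm_pos y); unfold B; nra).
  assert (Hclose : forall eps, 0 < eps -> exists N, forall n, (N <= n)%nat ->
            Rabs c * hnorm (hsub (u n) l) * hnorm y < eps).
  { intros eps He. destruct (Hu (eps / B)) as [N HN]; [apply Rdiv_lt_0_compat; lra|].
    exists N. intros n Hn. specialize (HN n Hn).
    pose proof (hnorm_pos (hsub (u n) l)). pose proof (Rabs_pos c). pose proof (hnorm_pos y).
    assert (E : B * (eps / B) = eps) by (field; lra).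
    unfold B in *. nra. }
  split; intros eps He; destruct (Hclose eps He) as [N HN]; exists N; intros n Hn;
    specialize (HN n Hn); unfold Rdist;
    destruct (bounded_inner_le T c (hsub (u n) l) y HT) as [Bre Bim];
    rewrite (linear_sub _ _ _ HTl), inner_sub_l in Bre, Bim; simpl in Bre, Bim; lra.
Qed.

Lemma limit_inner_eq {X Y Z W : Hilbert} (T : X -> Y) (S : Z -> W) c d
    (u : nat -> X) (l : X) (v : nat -> Z) (m : Z) (y : Y) (z : W) :
  linear_map T -> op_norm_le T c -> linear_map S -> op_norm_le S d ->
  converges u l -> converges v m ->
  (forall n, hinner (T (u n)) y = hinner (S (v n)) z) ->
  hinner (T l) y = hinner (S m) z.
Proof.
  intros HTl HT HSl HS Hu Hv E.
  destruct (inner_cv T c u l y HTl HT Hu) as [Tre Tim].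
  destruct (inner_cv S d v m z HSl HS Hv) as [Sre Sim].
  apply Ceq; [eapply UL_sequence; [exact Tre|] | eapply UL_sequence; [exact Tim|]];
    eapply Un_cv_ext; [| eassumption | | eassumption]; intro n; rewrite E; reflexivity.
Qed.

(** ** Closed subspaces and restricted representations *)

Record closed_subspace {M : Hilbert} (P : M -> Prop) : Prop := {
  cs_zero : P hzero;
  cs_add : forall x y, P x -> P y -> P (hadd x y);
  cs_opp : forall x, P x -> P (hopp x);
  cs_scal : forall c x, P x -> P (hscal c x);
  cs_lim : forall (u : nat -> M) l, (forall n, P (u n)) -> converges u l -> P l
}.

Lemma sig_ext {T : Type} (P : T -> Prop) (x y : {z | P z}) :
  proj1_sig x = proj1_sig y -> x = y.
Proof. destruct x, y; simpl; intros; subst. f_equal. apply proof_irrelevance. Qed.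

Definition subspace_hilbert {M : Hilbert} (P : M -> Prop) (HP : closed_subspace P)
  : Hilbert.
Proof.
  refine (@Build_Hilbert {x : M | P x} (exist _ hzero (cs_zero P HP))
   (fun x y => exist _ (hadd (proj1_sig x) (proj1_sig y))
                       (cs_add P HP _ _ (proj2_sig x) (proj2_sig y)))
   (fun x => exist _ (hopp (proj1_sig x)) (cs_opp P HP _ (proj2_sig x)))
   (fun c x => exist _ (hscal c (proj1_sig x)) (cs_scal P HP c _ (proj2_sig x)))
   (fun x y => hinner (proj1_sig x) (proj1_sig y)) _ _ _ _ _ _ _ _ _ _ _ _ _ _).
  all: try (intros; apply sig_ext; simpl).
  - apply hadd_assoc.
  - apply hadd_comm.
  - apply hadd_0.
  - apply hadd_opp.
  - apply hscal_1.
  - apply hscal_mul.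
  - apply hscal_addr.
  - apply hscal_addl.
  - intros; simpl; apply hinner_addl.
  - intros; simpl; apply hinner_scall.
  - intros; simpl; apply hinner_conj.
  - intros; simpl; apply hinner_pos.
  - apply hinner_def. assumption.
  - intros u Hc. destruct (hcomplete M (fun n => proj1_sig (u n)) Hc) as [l Hl].
    exists (exist _ l (cs_lim P HP _ l (fun n => proj2_sig (u n)) Hl)). exact Hl.
Defined.

Definition subspace_lift {K M : Hilbert} (P : M -> Prop) (HP : closed_subspace P)
    (f : K -> M) (Pf : forall k, P (f k)) : K -> subspace_hilbert P HP :=
  fun k => exist _ (f k) (Pf k).

Lemma subspace_lift_isometry {K M : Hilbert} (P : M -> Prop) (HP : closed_subspace P)
    (f : K -> M) (Pf : forall k, P (f k)) :
  isometry f -> isometry (subspace_lift P HP f Pf).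
Proof.
  intros [[Hadd Hscal] Hinner]. split; [split|]; intros.
  - apply sig_ext. apply Hadd.
  - apply sig_ext. apply Hscal.
  - apply Hinner.
Qed.

Lemma sumR_ext n f g : (forall i, (i < n)%nat -> f i = g i) -> sumR n f = sumR n g.
Proof. induction n; simpl; intros E; auto. rewrite IHn, E; auto. Qed.

Lemma hsum_ext {X : Hilbert} n (f g : nat -> X) :
  (forall i, (i < n)%nat -> f i = g i) -> hsum n f = hsum n g.
Proof. induction n; simpl; intros E; auto. rewrite IHn, E; auto. Qed.

Section Restriction.
Context {H0 : Hilbert} (A : (H0 -> H0) -> Prop) (HA : unital_operator_algebra A).
Context {M : Hilbert} (mu : (H0 -> H0) -> M -> M) (Hmu : representation A M mu).
Context (P : M -> Prop) (HP : closed_subspace P).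
Context (Pinv : forall a, A a -> forall x, P x -> P (mu a x)).

(** The restriction of [mu] to an invariant closed subspace (outside [A] the
    value is irrelevant and taken to be the identity). *)
Definition restrict_rep : (H0 -> H0) -> subspace_hilbert P HP -> subspace_hilbert P HP :=
  fun a x => match excluded_middle_informative (A a) with
  | left Ha => exist _ (mu a (proj1_sig x)) (Pinv a Ha _ (proj2_sig x))
  | right _ => x end.

Lemma restrict_rep_val a x :
  A a -> proj1_sig (restrict_rep a x) = mu a (proj1_sig x).
Proof.
  intros Ha. unfold restrict_rep.
  destruct (excluded_middle_informative (A a)); [reflexivity | contradiction].
Qed.

Lemma hsum_val n (g : nat -> subspace_hilbert P HP) :
  proj1_sig (hsum n g) = hsum n (fun j => proj1_sig (g j)).
Proof. induction n as [|n IH]; simpl; [reflexivity|]. rewrite IH. reflexivity. Qed.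

Lemma restrict_representation :
  representation A (subspace_hilbert P HP) restrict_rep.
Proof.
  destruct Hmu as [Hbnd [Hid [Hadd [Hscal [Hcomp Hcc]]]]].
  destruct HA as [_ [HAid [HAadd [HAscal [HAcomp _]]]]].
  split; [|split; [|split; [|split; [|split]]]].
  - intros a Ha. destruct (Hbnd a Ha) as [[Hla Hsa] [c Hc]].
    split; [split|].
    + intros x y. apply sig_ext. simpl. rewrite !restrict_rep_val by auto. apply Hla.
    + intros z x. apply sig_ext. simpl. rewrite !restrict_rep_val by auto. apply Hsa.
    + exists c. intro x. change (hnorm (proj1_sig (restrict_rep a x)) <= c * hnorm (proj1_sig x)).
      rewrite restrict_rep_val by auto. apply Hc.
  - intro x. apply sig_ext. rewrite restrict_rep_val by auto. apply Hid.
  - intros a b Ha Hb x. apply sig_ext. simpl. rewrite !restrict_rep_val by auto. auto.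
  - intros z a Ha x. apply sig_ext. simpl. rewrite !restrict_rep_val by auto. auto.
  - intros a b Ha Hb x. apply sig_ext. rewrite !restrict_rep_val by auto. auto.
  - intros n a c Hc HAa Hmat x.
    change (sumR n (fun i => hnorm (proj1_sig (hsum n (fun j => restrict_rep (a i j) (x j)))) ^ 2)
      <= c ^ 2 * sumR n (fun j => hnorm (proj1_sig (x j)) ^ 2)).
    erewrite sumR_ext.
    2:{ intros i Hi. rewrite hsum_val.
        rewrite (hsum_ext n _ (fun j => mu (a i j) (proj1_sig (x j)))); [reflexivity|].
        intros j Hj. apply restrict_rep_val. auto. }
    apply (Hcc n a c Hc HAa Hmat (fun j => proj1_sig (x j))).
Qed.

End Restriction.

Lemma isometry_comp {H K L : Hilbert} (V : H -> K) (W : K -> L) :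
  isometry V -> isometry W -> isometry (fun h => W (V h)).
Proof.
  intros [[Va Vs] Vi] [[Wa Ws] Wi]. split; [split|]; intros.
  - rewrite Va, Wa; reflexivity.
  - rewrite Vs, Ws; reflexivity.
  - rewrite Wi, Vi; reflexivity.
Qed.

Lemma dilation_comp {H0 : Hilbert} (A : (H0 -> H0) -> Prop) {H K L : Hilbert}
    (tau : (H0 -> H0) -> L -> L) (sigma : (H0 -> H0) -> K -> K)
    (rho : (H0 -> H0) -> H -> H) (V : H -> K) (W : K -> L) :
  dilation A tau sigma W -> dilation A sigma rho V ->
  dilation A tau rho (fun h => W (V h)).
Proof.
  intros [HW HtauW] [HV HsigV]. split; [apply isometry_comp; auto|].
  intros a Ha h h'. rewrite HtauW by auto. apply HsigV, Ha.
Qed.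

(** ** The compression space of a dilation *)

Section Compression.
Context {H0 : Hilbert} (A : (H0 -> H0) -> Prop) (HA : unital_operator_algebra A).
Context {K M : Hilbert} (sigma : (H0 -> H0) -> K -> K) (mu : (H0 -> H0) -> M -> M).
Context (Hsigma : representation A K sigma) (Hmu : representation A M mu).
Context (f : K -> M) (Hf : isometry f).

(** The vectors [n] of [M] whose compression to [K] intertwines [mu] and
    [sigma]: [P_K mu(a) n = sigma(a) k0] for a single [k0], necessarily
    [k0 = P_K n] (take [a = 1]). *)
Definition compression_space (n : M) : Prop :=
  exists k0 : K, forall a, A a -> forall k, hinner (mu a n) (f k) = hinner (sigma a k0) k.

Lemma compression_witness n k0 :
  (forall a, A a -> forall k, hinner (mu a n) (f k) = hinner (sigma a k0) k) ->
  forall k, hinner n (f k) = hinner k0 k.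
Proof.
  intros Hk0 k. pose proof (Hk0 _ (proj1 (proj2 HA)) k) as E.
  destruct Hsigma as [_ [Hs1 _]]. destruct Hmu as [_ [Hm1 _]].
  rewrite Hm1, Hs1 in E. exact E.
Qed.

(** Compression is contractive: if [<e, f k> = <d, k>] for all [k], then
    [||d|| <= ||e||] (test against [k = d] and use Cauchy-Schwarz). *)
Lemma compression_contractive (e : M) (d : K) :
  (forall k, hinner e (f k) = hinner d k) -> hnorm d <= hnorm e.
Proof.
  intros E.
  pose proof (Rle_trans _ _ _ (Rle_abs _) (cauchy_schwarz_re e (f d))) as CS.
  rewrite E, <- hnorm_sq in CS.
  replace (hnorm (f d)) with (hnorm d) in CS
    by (unfold hnorm; rewrite (proj2 Hf); reflexivity).
  pose proof (hnorm_pos d). pose proof (hnorm_pos e). nra.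
Qed.

(** [N] is a closed subspace; closedness uses that compression is
    contractive, so compressions of a convergent sequence converge in [K]. *)
Lemma compression_closed : closed_subspace compression_space.
Proof.
  destruct Hsigma as [Bsig _]. destruct Hmu as [Bmu _].
  assert (Hscal : forall c x, compression_space x -> compression_space (hscal c x)).
  { intros c x [k0 Hk0]. exists (hscal c k0). intros a Ha k.
    destruct (Bmu a Ha) as [[_ Sm] _]. destruct (Bsig a Ha) as [[_ Ss] _].
    rewrite Sm, Ss, !hinner_scall, Hk0; auto. }
  split.
  - exists hzero. intros a Ha k.
    destruct (Bmu a Ha) as [Lm _]. destruct (Bsig a Ha) as [Ls _].
    rewrite (linear_zero _ Lm), (linear_zero _ Ls), !inner0l. reflexivity.
  - intros x y [k1 H1] [k2 H2]. exists (hadd k1 k2). intros a Ha k.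
    destruct (Bmu a Ha) as [[Am _] _]. destruct (Bsig a Ha) as [[As _] _].
    rewrite Am, As, !hinner_addl, H1, H2; auto.
  - intros x Hx. rewrite hopp_scal. apply Hscal, Hx.
  - exact Hscal.
  - intros u l Hu Hl.
    set (kf := fun n => proj1_sig (constructive_indefinite_description _ (Hu n))).
    assert (Hkf : forall n a, A a -> forall k,
               hinner (mu a (u n)) (f k) = hinner (sigma a (kf n)) k)
      by (intro n; exact (proj2_sig (constructive_indefinite_description _ (Hu n)))).
    assert (Hdom : forall m n, hnorm (hsub (kf m) (kf n)) <= hnorm (hsub (u m) (u n))).
    { intros m n. apply compression_contractive. intro k.
      rewrite !inner_sub_l, !(compression_witness _ _ (Hkf _)). reflexivity. }
    destruct (dominated_increments_converge u l kf Hl Hdom) as [k0 Hk0].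
    exists k0. intros a Ha k.
    destruct (Bmu a Ha) as [Lm [cm Cm]]. destruct (Bsig a Ha) as [Ls [cs Cs]].
    exact (limit_inner_eq _ _ _ _ u l kf k0 (f k) k Lm Cm Ls Cs Hl Hk0
             (fun n => Hkf n a Ha k)).
Qed.

(** [N] is invariant under [mu], because [mu] is multiplicative. *)
Lemma compression_invariant b x :
  A b -> compression_space x -> compression_space (mu b x).
Proof.
  intros Hb [k0 Hk0]. exists (sigma b k0). intros a Ha k.
  destruct Hsigma as [_ [_ [_ [_ [Csig _]]]]]. destruct Hmu as [_ [_ [_ [_ [Cmu _]]]]].
  assert (Hab : A (fun y => a (b y))) by (apply HA; auto).
  rewrite <- Cmu, <- Csig by auto. apply Hk0, Hab.
Qed.

Lemma compression_contains_range :
  (forall a, A a -> forall k k', hinner (mu a (f k)) (f k') = hinner (sigma a k) k') ->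
  forall k, compression_space (f k).
Proof. intros Hdil k. exists k. exact (fun a Ha => Hdil a Ha k). Qed.

(** A vector of [N] orthogonal to the range of [f] has zero compression, so
    [mu(a)] keeps it orthogonal: [N ⊖ K] is invariant. *)
Lemma compression_perp_invariant x :
  compression_space x -> (forall k, hinner x (f k) = C0) ->
  forall a, A a -> forall k, hinner (mu a x) (f k) = C0.
Proof.
  intros [k0 Hk0] Hperp a Ha k.
  assert (Hzero : k0 = hzero).
  { apply hinner_def. rewrite <- (compression_witness _ _ Hk0). apply Hperp. }
  destruct Hsigma as [Bsig _]. destruct (Bsig a Ha) as [Ls _].
  rewrite Hk0, Hzero, (linear_zero _ Ls) by auto. apply inner0l.
Qed.
End Compression.

(** ** Dilations of extremal coextensions are extensions *)

(** Restrict a dilation [mu] of [sigma] to the compression space [N]: this is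
    a coextension of [sigma], so extremality makes the range of [f] reducing
    for it; in particular that range is invariant under [mu]. *)
Lemma extremal_coextension_dilation_extension {H0 : Hilbert} (A : (H0 -> H0) -> Prop)
    {K M : Hilbert} (sigma : (H0 -> H0) -> K -> K) (mu : (H0 -> H0) -> M -> M)
    (f : K -> M) :
  unital_operator_algebra A ->
  representation A K sigma -> extremal_coextension A sigma ->
  representation A M mu -> dilation A mu sigma f -> extension A mu sigma f.
Proof.
  intros HA Hsigma Hextremal Hmu [Hf Hdil].
  set (P := compression_space A sigma mu f).
  set (HP := compression_closed A HA sigma mu Hsigma Hmu f Hf).
  set (Pinv := fun b Hb x Hx => compression_invariant A HA sigma mu Hsigma Hmu f b x Hb Hx).
  set (nu := restrict_rep A mu P HP Pinv).
  set (g := subspace_lift P HP f (compression_contains_range A sigma mu f Hdil)).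
  assert (Hcoext : coextension A nu sigma g).
  { split; [split|].
    - apply subspace_lift_isometry, Hf.
    - intros a Ha k k'. change (hinner (proj1_sig (nu a (g k))) (f k') = hinner (sigma a k) k').
      unfold nu. rewrite restrict_rep_val by auto. apply Hdil, Ha.
    - intros a Ha x Hx k. change (hinner (proj1_sig (nu a x)) (f k) = C0).
      unfold nu. rewrite restrict_rep_val by auto.
      exact (compression_perp_invariant A HA sigma mu Hsigma Hmu f _ (proj2_sig x) Hx a Ha k). }
  destruct (Hextremal _ nu g (restrict_representation A HA mu Hmu P HP Pinv) Hcoext)
    as [Hinv _].
  split; [split; assumption|].
  intros a Ha k. destruct (Hinv a Ha k) as [k' E]. exists k'.
  apply (f_equal (@proj1_sig _ _)) in E. unfold nu in E.
  rewrite restrict_rep_val in E by auto. exact E.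
Qed.

Theorem propositionP :
  forall (H0 : Hilbert) (A : (H0 -> H0) -> Prop),
    unital_operator_algebra A ->
  forall (H : Hilbert) (rho : (H0 -> H0) -> H -> H),
    representation A H rho ->
  forall (K : Hilbert) (sigma : (H0 -> H0) -> K -> K) (V : H -> K),
    representation A K sigma ->
    coextension A sigma rho V ->
    extremal_coextension A sigma ->
  forall (L : Hilbert) (tau : (H0 -> H0) -> L -> L) (W : K -> L),
    representation A L tau ->
    extension A tau sigma W ->
    fully_extremal A tau sigma W ->
    maximal A tau /\ dilation A tau rho (fun h => W (V h)).
Proof.
  intros H0 A HA H rho _ K sigma V Hsigma [HsigmaV _] Hextremal L tau W _
    [HtauW _] Hfully.
  split; [|exact (dilation_comp A tau sigma rho V W HtauW HsigmaV)].
  intros M mu U Hmu HmuU.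
  (* [mu] dilates [sigma] along [U ∘ W], hence is an extension of it. *)
  pose proof (dilation_comp A mu tau sigma W U HmuU HtauW) as HmuW.
  exact (Hfully M mu U Hmu HmuU
           (extremal_coextension_dilation_extension A sigma mu _ HA Hsigma Hextremal Hmu HmuW)).
Qed.
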